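(* Let $S^1=\mathbb{R}/2\pi\mathbb{Z}$ with coordinate $\theta$, let $T>0$, and let $u:[0,T]\times S^1\to\mathbb{R}$ be a smooth solution of the Camassa-Holm equation (with the coefficients below) $$\partial_t u-\tfrac14\partial_{t\theta\theta}u+3\,\partial_\theta u\,u-\tfrac12\,\partial_{\theta\theta}u\,\partial_\theta u-\tfrac14\,\partial_{\theta\theta\theta}u\,u=0 .$$ Identify $S^1\times(0,\infty)$ with $\mathbb{R}^2\setminus\{0\}$ via polar coordinates $(\theta,r)\mapsto re^{i\theta}$, and define the time-dependent vector field $v$ on $\mathbb{R}^2\setminus\{0\}$ by $$v(t,\theta,r)=u(t,\theta)\,\partial_\theta+\tfrac{r}{2}\,\partial_\theta u(t,\theta)\,\partial_r .$$ Then there exists a smooth function $P:[0,T]\times(\mathbb{R}^2\setminus\{0\})\to\mathbb{R}$ (of the form $P(t,\theta,r)=\tfrac12 r^2p(t,\theta)$ for some smooth $p$) such that $v$ solves the incompressible Euler equation on $\mathbb{R}^2\setminus\{0\}$ with respect to the density $\rho=r^{-4}\,\mathrm{Leb}$: $$\partial_t v+\nabla_v v=-\nabla P,\qquad \nabla\cdot(\rho v)=0,$$ where $\nabla$, $\nabla_v v$ and $\nabla\cdot$ refer to the Euclidean structure of $\mathbb{R}^2$.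
   Context: $\mathrm{Leb}$ denotes Lebesgue measure on $\mathbb{R}^2$; in polar coordinates $r^{-4}\mathrm{Leb}=r^{-3}\,\mathrm{d}r\,\mathrm{d}\theta$. The components $u$ and $\tfrac r2\partial_\theta u$ are the components of $v$ in the coordinate frame $(\partial_\theta,\partial_r)$ of polar coordinates. *)

From Stdlib Require Import Reals List ClassicalEpsilon.
Open Scope R_scope.

(** Partial derivatives, chosen classically (meaningful where they exist). *)
Definition pd (f : R -> R) (x : R) : R :=
  epsilon (inhabits 0) (fun l => derivable_pt_lim f x l).

Definition pd_t (f : R -> R -> R) : R -> R -> R := fun a b => pd (fun s => f s b) a.
Definition pd_th (f : R -> R -> R) : R -> R -> R := fun a b => pd (fun s => f a s) b.

Definition pdT (f : R -> R -> R -> R) : R -> R -> R -> R :=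
  fun t x y => pd (fun s => f s x y) t.
Definition pdX (f : R -> R -> R -> R) : R -> R -> R -> R :=
  fun t x y => pd (fun s => f t s y) x.
Definition pdY (f : R -> R -> R -> R) : R -> R -> R -> R :=
  fun t x y => pd (fun s => f t x s) y.

Definition cont2 (f : R -> R -> R) : Prop :=
  forall a b eps, 0 < eps -> exists del, 0 < del /\
    forall a' b', Rabs (a' - a) < del -> Rabs (b' - b) < del ->
      Rabs (f a' b' - f a b) < eps.

Definition cont3_on (U : R -> R -> R -> Prop) (f : R -> R -> R -> R) : Prop :=
  forall t x y, U t x y -> forall eps, 0 < eps -> exists del, 0 < del /\
    forall t' x' y', U t' x' y' -> Rabs (t' - t) < del -> Rabs (x' - x) < del ->
      Rabs (y' - y) < del -> Rabs (f t' x' y' - f t x y) < eps.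

Fixpoint iter_d2 (ds : list bool) (f : R -> R -> R) : R -> R -> R :=
  match ds with
  | nil => f
  | b :: ds' => (if b then pd_t else pd_th) (iter_d2 ds' f)
  end.

Definition smooth2 (f : R -> R -> R) : Prop :=
  forall ds : list bool,
    cont2 (iter_d2 ds f) /\
    (forall a b, derivable_pt_lim (fun s => iter_d2 ds f s b) a (pd_t (iter_d2 ds f) a b)) /\
    (forall a b, derivable_pt_lim (fun s => iter_d2 ds f a s) b (pd_th (iter_d2 ds f) a b)).

Definition dir3 (n : nat) : (R -> R -> R -> R) -> R -> R -> R -> R :=
  match n with 0 => pdT | 1 => pdX | _ => pdY end.

Fixpoint iter_d3 (ds : list nat) (f : R -> R -> R -> R) : R -> R -> R -> R :=
  match ds with
  | nil => f
  | n :: ds' => dir3 n (iter_d3 ds' f)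
  end.

Definition smooth3_on (U : R -> R -> R -> Prop) (f : R -> R -> R -> R) : Prop :=
  forall ds : list nat,
    cont3_on U (iter_d3 ds f) /\
    (forall t x y, U t x y ->
       derivable_pt_lim (fun s => iter_d3 ds f s x y) t (pdT (iter_d3 ds f) t x y) /\
       derivable_pt_lim (fun s => iter_d3 ds f t s y) x (pdX (iter_d3 ds f) t x y) /\
       derivable_pt_lim (fun s => iter_d3 ds f t x s) y (pdY (iter_d3 ds f) t x y)).

Definition punctured (t x y : R) : Prop := 0 < x ^ 2 + y ^ 2.

Definition rho (x y : R) : R := / (x ^ 2 + y ^ 2) ^ 2.

Definition CH_eq (u : R -> R -> R) (t th : R) : Prop :=
  pd_t u t th - / 4 * pd_th (pd_th (pd_t u)) t th + 3 * pd_th u t th * u t th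
  - / 2 * pd_th (pd_th u) t th * pd_th u t th - / 4 * pd_th (pd_th (pd_th u)) t th * u t th = 0.

(* In Cartesian coordinates the field is
   v = (- y U + x U' / 2, x U + y U' / 2), where U and U' are [u] and [u_th] evaluated
   at the polar angle. Functions of the form f(t, angle(x, y)) with f smooth and
   2 pi-periodic, together with x, y and 1 / (x^2 + y^2), generate an algebra of
   functions on the punctured plane that is closed under partial derivatives (the
   angle has derivatives -y / r^2 and x / r^2, and its 2 pi jumps are invisible to
   periodic f), so v and P = r^2 p(t, angle) / 2 are smooth there. A direct
   computation shows div (r^-4 v) = 0 identically. In the momentum equation both sides
   are homogeneous of degree one in (x, y); after commuting the t- and
   th-derivatives of u and choosing p = u^2 - u_th^2 / 4 - u u_thth / 2 - u_tth / 2,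
   the remaining identity is exactly the Camassa-Holm equation at (t, angle). *)

From Stdlib Require Import Reals Lra Lia ZArith Znumtheory List.
From Stdlib Require Import ClassicalEpsilon FunctionalExtensionality PropExtensionality.
From Coquelicot Require Import Coquelicot.
Open Scope R_scope.

Lemma pd_unique f x l : derivable_pt_lim f x l -> pd f x = l.
Proof.
  intro Hl. unfold pd. apply (uniqueness_limite f x); [|exact Hl].
  apply (epsilon_spec (inhabits 0) (fun l => derivable_pt_lim f x l)). eauto.
Qed.

Lemma pd_ext f g x y :
  (forall l, derivable_pt_lim f x l <-> derivable_pt_lim g y l) -> pd f x = pd g y.
Proof.
  intro H. unfold pd. f_equal. extensionality l. apply propositional_extensionality, H.
Qed.

Lemma derivable_pt_lim_value f x l l' :
  derivable_pt_lim f x l -> l = l' -> derivable_pt_lim f x l'.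
Proof. now intros H <-. Qed.

Lemma derivable_pt_lim_near f g x d l : 0 < d ->
  (forall s, Rabs (s - x) < d -> f s = g s) ->
  derivable_pt_lim g x l -> derivable_pt_lim f x l.
Proof.
  intros Hd Hfg. apply derivable_pt_lim_locally_ext with (x - d) (x + d); [lra|].
  intros z Hz. symmetry. apply Hfg, Rabs_def1; lra.
Qed.

Lemma derivable_pt_lim_inv f x l : derivable_pt_lim f x l -> f x <> 0 ->
  derivable_pt_lim (fun s => / f s) x (- l / (f x * f x)).
Proof.
  intros Hl Hf0.
  assert (Hdiv := derivable_pt_lim_div _ f x 0 l (derivable_pt_lim_const 1 x) Hl Hf0).
  apply derivable_pt_lim_ext with (div_fct (fun _ => 1) f).
  - intro s. unfold div_fct, Rdiv. ring.
  - eapply derivable_pt_lim_value; [exact Hdiv|]. unfold fct_cte, Rsqr. field. exact Hf0.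
Qed.

Lemma derivable_pt_lim_shift g a c l :
  derivable_pt_lim g (a + c) l <-> derivable_pt_lim (fun s => g (s + c)) a l.
Proof.
  split; intros H eps Heps; destruct (H eps Heps) as [d Hd]; exists d;
    intros h Hh0 Hhd; specialize (Hd h Hh0 Hhd).
  - now replace (a + h + c) with (a + c + h) by ring.
  - now replace (a + c + h) with (a + h + c) by ring.
Qed.

Definition periodic (g : R -> R) : Prop := forall th, g (th + 2 * PI) = g th.

Lemma periodic_pd_t f : (forall t, periodic (f t)) -> forall t, periodic (pd_t f t).
Proof.
  intros Hf t th. unfold pd_t. f_equal. extensionality s. apply Hf.
Qed.

Lemma periodic_pd_th f : (forall t, periodic (f t)) -> forall t, periodic (pd_th f t).
Proof.
  intros Hf t th. unfold pd_th. apply pd_ext. intro l.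
  rewrite derivable_pt_lim_shift.
  replace (fun s => f t (s + 2 * PI)) with (fun s => f t s); [tauto|].
  extensionality s. symmetry. apply Hf.
Qed.

Lemma periodic_derivative g g' : periodic g ->
  (forall th, derivable_pt_lim g th (g' th)) -> periodic g'.
Proof.
  intros Hg Hg' th. apply (uniqueness_limite g th); [|apply Hg'].
  apply derivable_pt_lim_ext with (fun s => g (s + 2 * PI)); [intro; apply Hg|].
  apply derivable_pt_lim_shift, Hg'.
Qed.

Lemma periodic_sub g : periodic g -> forall th, g (th - 2 * PI) = g th.
Proof. intros Hg th. rewrite <- (Hg (th - 2 * PI)). f_equal; ring. Qed.

Lemma periodic_INR g : periodic g -> forall th n, g (th + 2 * INR n * PI) = g th.
Proof.
  intros Hg th n; induction n as [|n IH].
  - simpl. f_equal; ring.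
  - rewrite <- IH, <- (Hg (th + 2 * INR n * PI)), S_INR. f_equal; ring.
Qed.

Lemma periodic_IZR g : periodic g -> forall th (m : Z), g (th + 2 * IZR m * PI) = g th.
Proof.
  intros Hg th m. destruct (Z_le_gt_dec 0 m) as [Hm|Hm].
  - destruct (Z_of_nat_complete m Hm) as [n ->].
    rewrite <- INR_IZR_INZ. apply periodic_INR, Hg.
  - destruct (Z_of_nat_complete (- m) ltac:(lia)) as [n Hn].
    replace m with (- Z.of_nat n)%Z by lia. rewrite opp_IZR, <- INR_IZR_INZ.
    rewrite <- (periodic_INR g Hg _ n). f_equal; ring.
Qed.

Lemma cos_2IZR_PI (m : Z) : cos (2 * IZR m * PI) = 1.
Proof.
  replace (2 * IZR m * PI) with (0 + 2 * IZR m * PI) by ring.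
  rewrite periodic_IZR, cos_0; [reflexivity|].
  intro th. rewrite <- (cos_period th 1). f_equal. simpl. ring.
Qed.

Lemma angle_eq_mod_2PI a b : cos a = cos b -> sin a = sin b ->
  exists m : Z, a = b + 2 * IZR m * PI.
Proof.
  intros Hc Hs.
  assert (Hsin : sin (a - b) = 0) by (rewrite sin_minus, Hc, Hs; ring).
  assert (Hcos : cos (a - b) = 1).
  { rewrite cos_minus, Hc, Hs, <- (sin2_cos2 b). unfold Rsqr. ring. }
  destruct (sin_eq_0_0 _ Hsin) as [k Hk].
  destruct (Zeven_odd_dec k) as [He|Ho].
  - destruct (Zeven_ex k He) as [m Hm]. exists m. rewrite Hm, mult_IZR in Hk. lra.
  - destruct (Zodd_ex k Ho) as [m Hm]. exfalso.
    rewrite Hm, plus_IZR, mult_IZR in Hk. rewrite Hk in Hcos.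
    replace ((IZR 2 * IZR m + IZR 1) * PI) with (2 * IZR m * PI + PI) in Hcos by (simpl; ring).
    rewrite neg_cos, cos_2IZR_PI in Hcos. lra.
Qed.

Definition polar_angle (x y : R) : R :=
  if Rlt_dec 0 x then atan (y / x)
  else if Rlt_dec 0 y then PI / 2 - atan (x / y)
  else if Rlt_dec y 0 then - (PI / 2) - atan (x / y)
  else PI.

Lemma atan_inv_neg q : q < 0 -> atan (/ q) = - (PI / 2) - atan q.
Proof.
  intro Hq. replace (/ q) with (- / (- q)) by (field; lra).
  rewrite atan_opp, atan_inv, atan_opp by lra. field.
Qed.

Lemma polar_angle_x_pos x y : 0 < x -> polar_angle x y = atan (y / x).
Proof. intro Hx. unfold polar_angle. destruct (Rlt_dec 0 x); [reflexivity|lra]. Qed.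

Lemma polar_angle_y_pos x y : 0 < y -> polar_angle x y = PI / 2 - atan (x / y).
Proof.
  intro Hy. unfold polar_angle. destruct (Rlt_dec 0 x).
  - replace (y / x) with (/ (x / y)) by (field; lra).
    apply atan_inv, Rdiv_lt_0_compat; lra.
  - destruct (Rlt_dec 0 y); [reflexivity|lra].
Qed.

Lemma polar_angle_y_neg x y : y < 0 -> polar_angle x y = - (PI / 2) - atan (x / y).
Proof.
  intro Hy. unfold polar_angle. destruct (Rlt_dec 0 x).
  - replace (y / x) with (/ (x / y)) by (field; lra). apply atan_inv_neg.
    replace (x / y) with (- (x / - y)) by (field; lra).
    assert (0 < x / - y) by (apply Rdiv_lt_0_compat; lra). lra.
  - destruct (Rlt_dec 0 y); [lra|]. destruct (Rlt_dec y 0); [reflexivity|lra].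
Qed.

(* Across the negative x-axis the branch of [atan (y / x)] jumps by [2 PI]. *)
Lemma polar_angle_x_neg x y : x < 0 ->
  polar_angle x y = PI + atan (y / x) \/ polar_angle x y = PI + atan (y / x) - 2 * PI.
Proof.
  intro Hx. destruct (Rlt_dec 0 y) as [Hy|Hy]; [|destruct (Rlt_dec y 0) as [Hy'|Hy']].
  - left. rewrite polar_angle_y_pos by exact Hy.
    replace (y / x) with (/ (x / y)) by (field; lra).
    rewrite atan_inv_neg; [lra|].
    replace (x / y) with (- (- x / y)) by (field; lra).
    assert (0 < - x / y) by (apply Rdiv_lt_0_compat; lra). lra.
  - right. rewrite polar_angle_y_neg by exact Hy'.
    replace (y / x) with (/ (x / y)) by (field; lra).
    rewrite atan_inv; [field|].
    replace (x / y) with ((- x) / (- y)) by (field; lra). apply Rdiv_lt_0_compat; lra.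
  - left. replace y with 0 by lra. unfold polar_angle.
    destruct (Rlt_dec 0 x); [lra|]. destruct (Rlt_dec 0 0); [lra|].
    destruct (Rlt_dec 0 0); [lra|].
    replace (0 / x) with 0 by (field; lra). rewrite atan_0. field.
Qed.

(* On the half-plane where [x] has the sign of [x0] the angle equals
   [angle_offset_x x0 + atan (y / x)] modulo [2 PI]; on the half-plane where [y] has
   the sign of [y0] it equals [angle_offset_y y0 - atan (x / y)] exactly. *)
Definition angle_offset_x (x0 : R) : R := if Rlt_dec 0 x0 then 0 else PI.
Definition angle_offset_y (y0 : R) : R := if Rlt_dec 0 y0 then PI / 2 else - (PI / 2).

Lemma periodic_polar_angle_x (g : R -> R) x0 x y : periodic g -> 0 < x * x0 ->
  g (polar_angle x y) = g (angle_offset_x x0 + atan (y / x)).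
Proof.
  intros Hg Hx. unfold angle_offset_x. destruct (Rlt_dec 0 x0) as [Hx0|Hx0].
  - rewrite polar_angle_x_pos by nra. f_equal. ring.
  - destruct (polar_angle_x_neg x y ltac:(nra)) as [-> | ->]; [reflexivity|].
    apply periodic_sub, Hg.
Qed.

Lemma polar_angle_y_offset y0 x y : 0 < y * y0 ->
  polar_angle x y = angle_offset_y y0 - atan (x / y).
Proof.
  intros Hy. unfold angle_offset_y. destruct (Rlt_dec 0 y0) as [Hy0|Hy0].
  - apply polar_angle_y_pos. nra.
  - apply polar_angle_y_neg. nra.
Qed.

Lemma sqrt_sum_sq a b : a <> 0 -> sqrt (a ^ 2 + b ^ 2) = Rabs a * sqrt (1 + (b / a)²).
Proof.
  intro Ha. rewrite <- (sqrt_square (Rabs a)) by apply Rabs_pos.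
  rewrite <- sqrt_mult_alt by (apply Rmult_le_pos; apply Rabs_pos).
  f_equal. rewrite <- Rabs_mult, Rabs_pos_eq by apply Rle_0_sqr. unfold Rsqr. field. exact Ha.
Qed.

Lemma sqrt_1_sq_pos q : 0 < sqrt (1 + q²).
Proof. apply sqrt_lt_R0. pose proof (Rle_0_sqr q). lra. Qed.

Lemma polar_coordinates x y : 0 < x ^ 2 + y ^ 2 ->
  x = sqrt (x ^ 2 + y ^ 2) * cos (polar_angle x y) /\
  y = sqrt (x ^ 2 + y ^ 2) * sin (polar_angle x y).
Proof.
  intro Hr.
  destruct (Rlt_dec 0 x) as [Hx|Hx]; [|destruct (Rlt_dec 0 y) as [Hy|Hy];
    [|destruct (Rlt_dec y 0) as [Hy'|Hy']]].
  - rewrite polar_angle_x_pos, sqrt_sum_sq, cos_atan, sin_atan, Rabs_pos_eq by lra.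
    pose proof (sqrt_1_sq_pos (y / x)). split; field; lra.
  - rewrite polar_angle_y_pos by lra. rewrite (Rplus_comm (x ^ 2)), sqrt_sum_sq by lra.
    rewrite cos_shift, sin_shift, cos_atan, sin_atan, Rabs_pos_eq by lra.
    pose proof (sqrt_1_sq_pos (x / y)). split; field; lra.
  - rewrite polar_angle_y_neg by lra. rewrite (Rplus_comm (x ^ 2)), sqrt_sum_sq by lra.
    replace (- (PI / 2) - atan (x / y)) with ((PI / 2 - atan (x / y)) - PI) by field.
    rewrite (cos_minus _ PI), (sin_minus _ PI), cos_PI, sin_PI, cos_shift, sin_shift, cos_atan, sin_atan,
      Rabs_left by lra.
    pose proof (sqrt_1_sq_pos (x / y)). split; field; lra.
  - assert (Hy0 : y = 0) by lra. subst y.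
    assert (Hxn : x < 0) by (destruct (Rlt_dec x 0); [assumption|]; simpl in Hr; nra).
    unfold polar_angle. destruct (Rlt_dec 0 x); [lra|].
    destruct (Rlt_dec 0 0); [lra|]. destruct (Rlt_dec 0 0); [lra|].
    rewrite cos_PI, sin_PI. replace (x ^ 2 + 0 ^ 2) with (- x * - x) by ring.
    rewrite sqrt_square by lra. split; ring.
Qed.

Lemma sum_sq_cos_sin r th : (r * cos th) ^ 2 + (r * sin th) ^ 2 = r * r.
Proof.
  pose proof (sin2_cos2 th) as E. unfold Rsqr in E.
  transitivity (r * r * (sin th * sin th + cos th * cos th)); [ring|rewrite E; ring].
Qed.

Lemma polar_angle_cos_sin r th : 0 < r ->
  exists m : Z, th = polar_angle (r * cos th) (r * sin th) + 2 * IZR m * PI.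
Proof.
  intro Hr. set (x := r * cos th). set (y := r * sin th).
  assert (Hxy : x ^ 2 + y ^ 2 = r * r) by apply sum_sq_cos_sin.
  destruct (polar_coordinates x y ltac:(nra)) as [Hx Hy].
  rewrite Hxy, sqrt_square in Hx, Hy by lra.
  apply angle_eq_mod_2PI; apply Rmult_eq_reg_l with r; try lra.
  - fold x. lra.
  - fold y. lra.
Qed.

Lemma derivable_pt_lim_atan_div_l q p : p <> 0 ->
  derivable_pt_lim (fun s => atan (q / s)) p (- q / (p ^ 2 + q ^ 2)).
Proof.
  intro Hp.
  eapply derivable_pt_lim_value.
  - apply (derivable_pt_lim_comp (fun s => q / s) atan).
    + apply derivable_pt_lim_mult; [apply derivable_pt_lim_const|].
      apply derivable_pt_lim_inv; [apply derivable_pt_lim_id|exact Hp].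
    + apply derivable_pt_lim_atan.
  - cbv beta. unfold fct_cte. assert (p ^ 2 + q ^ 2 <> 0) by nra. field. auto.
Qed.

Lemma derivable_pt_lim_atan_div_r q p : q <> 0 ->
  derivable_pt_lim (fun s => atan (s / q)) p (q / (q ^ 2 + p ^ 2)).
Proof.
  intro Hq.
  eapply derivable_pt_lim_value.
  - apply (derivable_pt_lim_comp (fun s => s / q) atan).
    + apply derivable_pt_lim_mult; [apply derivable_pt_lim_id|apply derivable_pt_lim_const].
    + apply derivable_pt_lim_atan.
  - cbv beta. unfold fct_cte. assert (q ^ 2 + p ^ 2 <> 0) by nra. field. auto.
Qed.

Lemma same_sign_near s x : Rabs (s - x) < Rabs x -> 0 < s * x.
Proof.
  intro Hs. destruct (Rle_or_lt 0 x) as [Hx|Hx].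
  - rewrite (Rabs_pos_eq x Hx) in Hs. apply Rabs_def2 in Hs. nra.
  - rewrite (Rabs_left x Hx) in Hs. apply Rabs_def2 in Hs. nra.
Qed.

Lemma derivable_pt_lim_polar_angle_x g g' x y : periodic g ->
  (forall th, derivable_pt_lim g th (g' th)) -> 0 < x ^ 2 + y ^ 2 ->
  derivable_pt_lim (fun s => g (polar_angle s y)) x
    (g' (polar_angle x y) * (- y / (x ^ 2 + y ^ 2))).
Proof.
  intros Hg Hg' Hxy. destruct (Req_dec y 0) as [Hy|Hy].
  - subst y. assert (Hx : x <> 0) by (intro; subst; simpl in Hxy; lra).
    rewrite (periodic_polar_angle_x g' x) by (apply periodic_derivative with g || nra; auto).
    apply derivable_pt_lim_near
      with (g := fun s => g (angle_offset_x x + atan (0 / s))) (d := Rabs x).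
    + apply Rabs_pos_lt, Hx.
    + intros s Hs. apply periodic_polar_angle_x, same_sign_near; assumption.
    + apply (derivable_pt_lim_comp (fun s => angle_offset_x x + atan (0 / s)) g); [|apply Hg'].
      eapply derivable_pt_lim_value.
      * apply derivable_pt_lim_plus; [apply derivable_pt_lim_const|].
        apply derivable_pt_lim_atan_div_l, Hx.
      * ring.
  - rewrite (polar_angle_y_offset y) by nra.
    apply derivable_pt_lim_ext with (fun s => g (angle_offset_y y - atan (s / y))).
    + intro s. rewrite (polar_angle_y_offset y) by nra. reflexivity.
    + apply (derivable_pt_lim_comp (fun s => angle_offset_y y - atan (s / y)) g); [|apply Hg'].
      eapply derivable_pt_lim_value.
      * apply derivable_pt_lim_minus; [apply derivable_pt_lim_const|].
        apply derivable_pt_lim_atan_div_r, Hy.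
      * field. nra.
Qed.

Lemma derivable_pt_lim_polar_angle_y g g' x y : periodic g ->
  (forall th, derivable_pt_lim g th (g' th)) -> 0 < x ^ 2 + y ^ 2 ->
  derivable_pt_lim (fun s => g (polar_angle x s)) y
    (g' (polar_angle x y) * (x / (x ^ 2 + y ^ 2))).
Proof.
  intros Hg Hg' Hxy. destruct (Req_dec x 0) as [Hx|Hx].
  - subst x. assert (Hy : y <> 0) by (intro; subst; simpl in Hxy; lra).
    rewrite (polar_angle_y_offset y) by nra.
    apply derivable_pt_lim_near
      with (g := fun s => g (angle_offset_y y - atan (0 / s))) (d := Rabs y).
    + apply Rabs_pos_lt, Hy.
    + intros s Hs. rewrite (polar_angle_y_offset y); [reflexivity|].
      apply same_sign_near, Hs.
    + apply (derivable_pt_lim_comp (fun s => angle_offset_y y - atan (0 / s)) g); [|apply Hg'].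
      eapply derivable_pt_lim_value.
      * apply derivable_pt_lim_minus; [apply derivable_pt_lim_const|].
        apply derivable_pt_lim_atan_div_l, Hy.
      * field. nra.
  - rewrite (periodic_polar_angle_x g' x)
      by (apply periodic_derivative with g || nra; auto).
    apply derivable_pt_lim_ext with (fun s => g (angle_offset_x x + atan (s / x))).
    + intro s. symmetry. apply periodic_polar_angle_x; [exact Hg|nra].
    + apply (derivable_pt_lim_comp (fun s => angle_offset_x x + atan (s / x)) g); [|apply Hg'].
      eapply derivable_pt_lim_value.
      * apply derivable_pt_lim_plus; [apply derivable_pt_lim_const|].
        apply derivable_pt_lim_atan_div_r, Hx.
      * field. nra.
Qed.

Definition cont2_at (h : R -> R -> R) (a b : R) : Prop := forall eps, 0 < eps ->
  exists del, 0 < del /\ forall a' b', Rabs (a' - a) < del -> Rabs (b' - b) < del ->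
    Rabs (h a' b' - h a b) < eps.

Lemma Rplus_cont2_at a b : cont2_at Rplus a b.
Proof.
  intros eps Heps. exists (eps / 2). split; [lra|]. intros a' b' Ha Hb.
  replace (a' + b' - (a + b)) with ((a' - a) + (b' - b)) by ring.
  eapply Rle_lt_trans; [apply Rabs_triang|]. lra.
Qed.

Lemma Rmult_cont2_at a b : cont2_at Rmult a b.
Proof.
  intros eps Heps. set (K := 1 + Rabs a + Rabs b).
  assert (HK : 1 <= K) by (unfold K; pose proof (Rabs_pos a); pose proof (Rabs_pos b); lra).
  set (d := Rmin 1 (eps / (2 * K))).
  assert (Hd1 : d <= 1) by apply Rmin_l.
  assert (HdK : K * d <= eps / 2).
  { apply Rle_trans with (K * (eps / (2 * K))).
    - apply Rmult_le_compat_l; [lra|apply Rmin_r].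
    - right. field. lra. }
  exists d. split; [apply Rmin_pos; [lra|apply Rdiv_lt_0_compat; lra]|].
  intros a' b' Ha Hb.
  replace (a' * b' - a * b) with ((a' - a) * (b' - b) + a * (b' - b) + b * (a' - a)) by ring.
  pose proof (Rabs_pos (a' - a)). pose proof (Rabs_pos (b' - b)).
  pose proof (Rabs_pos a). pose proof (Rabs_pos b).
  eapply Rle_lt_trans; [apply Rabs_triang|].
  eapply Rle_lt_trans; [apply Rplus_le_compat_r, Rabs_triang|].
  rewrite !Rabs_mult. unfold K in HdK. nra.
Qed.

(* Convergence of [f z] to [c] as [z] runs through the shrinking family [near d],
   a filter base in all uses below. *)
Section Tends.
Variable X : Type.
Variable near : R -> X -> Prop.
Hypothesis near_mono : forall d1 d2 z, 0 < d1 -> d1 <= d2 -> near d1 z -> near d2 z.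

Definition tends (f : X -> R) (c : R) : Prop := forall eps, 0 < eps ->
  exists d, 0 < d /\ forall z, near d z -> Rabs (f z - c) < eps.

Lemma tends_const c : tends (fun _ => c) c.
Proof.
  intros eps Heps. exists 1. split; [lra|]. intros z _.
  unfold Rminus. rewrite Rplus_opp_r, Rabs_R0. exact Heps.
Qed.

Lemma tends_comp2 h f g a b : cont2_at h a b -> tends f a -> tends g b ->
  tends (fun z => h (f z) (g z)) (h a b).
Proof.
  intros Hh Hf Hg eps Heps. destruct (Hh eps Heps) as [del [Hdel Hhd]].
  destruct (Hf del Hdel) as [d1 [Hd1 H1]]. destruct (Hg del Hdel) as [d2 [Hd2 H2]].
  assert (Hd : 0 < Rmin d1 d2) by (apply Rmin_pos; assumption).
  exists (Rmin d1 d2). split; [exact Hd|]. intros z Hz.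
  apply Hhd; [apply H1|apply H2]; eapply near_mono; eauto; [apply Rmin_l|apply Rmin_r].
Qed.

Lemma tends_comp g f b : continuity_pt g b -> tends f b -> tends (fun z => g (f z)) (g b).
Proof.
  intros Hg Hf eps Heps. destruct (Hg eps Heps) as [del [Hdel Hgd]].
  destruct (Hf del Hdel) as [d [Hd Hfd]]. exists d. split; [exact Hd|]. intros z Hz.
  destruct (Req_dec (f z) b) as [E|E].
  - rewrite E. unfold Rminus. rewrite Rplus_opp_r, Rabs_R0. exact Heps.
  - apply (Hgd (f z)). split; [split; [exact I|auto]|]. exact (Hfd z Hz).
Qed.

Lemma tends_eventually_ext f g c : (exists d0, 0 < d0 /\ forall z, near d0 z -> f z = g z) ->
  tends g c -> tends f c.
Proof.
  intros [d0 [Hd0 Hfg]] Hg eps Heps. destruct (Hg eps Heps) as [d [Hd Hgd]].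
  assert (Hm : 0 < Rmin d d0) by (apply Rmin_pos; assumption).
  exists (Rmin d d0). split; [exact Hm|]. intros z Hz.
  rewrite Hfg by (eapply near_mono; eauto; apply Rmin_r).
  apply Hgd. eapply near_mono; eauto. apply Rmin_l.
Qed.

Lemma tends_plus f g a b : tends f a -> tends g b -> tends (fun z => f z + g z) (a + b).
Proof. intros Hf Hg. apply (tends_comp2 Rplus); auto. apply Rplus_cont2_at. Qed.

Lemma tends_mult f g a b : tends f a -> tends g b -> tends (fun z => f z * g z) (a * b).
Proof. intros Hf Hg. apply (tends_comp2 Rmult); auto. apply Rmult_cont2_at. Qed.

End Tends.

Arguments tends {X}.

Definition near2 (a b : R) (d : R) (z : R * R) : Prop :=
  Rabs (fst z - a) < d /\ Rabs (snd z - b) < d.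

Lemma near2_mono a b d1 d2 z : 0 < d1 -> d1 <= d2 -> near2 a b d1 z -> near2 a b d2 z.
Proof. intros _ Hd [H1 H2]. split; lra. Qed.

Lemma cont2_tends f :
  cont2 f <-> forall a b, tends (near2 a b) (fun z => f (fst z) (snd z)) (f a b).
Proof.
  split.
  - intros Hf a b eps Heps. destruct (Hf a b eps Heps) as [d [Hd Hfd]].
    exists d. split; [exact Hd|]. intros z [H1 H2]. apply Hfd; assumption.
  - intros Hf a b eps Heps. destruct (Hf a b eps Heps) as [d [Hd Hfd]].
    exists d. split; [exact Hd|]. intros a' b' H1 H2. apply (Hfd (a', b')). split; assumption.
Qed.

Lemma cont2_const c : cont2 (fun _ _ => c).
Proof. apply cont2_tends. intros. apply tends_const. Qed.

Lemma cont2_plus f g : cont2 f -> cont2 g -> cont2 (fun a b => f a b + g a b).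
Proof.
  rewrite !cont2_tends. intros Hf Hg a b. apply tends_plus; auto. apply near2_mono.
Qed.

Lemma cont2_mult f g : cont2 f -> cont2 g -> cont2 (fun a b => f a b * g a b).
Proof.
  rewrite !cont2_tends. intros Hf Hg a b. apply tends_mult; auto. apply near2_mono.
Qed.

Lemma iter_d2_app ds b f :
  iter_d2 (ds ++ b :: nil) f = iter_d2 ds ((if b then pd_t else pd_th) f).
Proof. induction ds as [|c ds IH]; simpl; [reflexivity|]. rewrite IH. reflexivity. Qed.

Lemma smooth2_pd_t f : smooth2 f -> smooth2 (pd_t f).
Proof. intros Hf ds. rewrite <- (iter_d2_app ds true). apply Hf. Qed.

Lemma smooth2_pd_th f : smooth2 f -> smooth2 (pd_th f).
Proof. intros Hf ds. rewrite <- (iter_d2_app ds false). apply Hf. Qed.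

Definition has_pd_t (f : R -> R -> R) : Prop :=
  forall a b, derivable_pt_lim (fun s => f s b) a (pd_t f a b).
Definition has_pd_th (f : R -> R -> R) : Prop :=
  forall a b, derivable_pt_lim (fun s => f a s) b (pd_th f a b).

Section DifferentialPolynomials.
Variable u : R -> R -> R.
Hypothesis u_smooth : smooth2 u.

Inductive diff_poly : (R -> R -> R) -> Prop :=
| diff_poly_deriv ds : diff_poly (iter_d2 ds u)
| diff_poly_const c : diff_poly (fun _ _ => c)
| diff_poly_plus f g : diff_poly f -> diff_poly g -> diff_poly (fun a b => f a b + g a b)
| diff_poly_mult f g : diff_poly f -> diff_poly g -> diff_poly (fun a b => f a b * g a b).

Lemma diff_poly_cont2 f : diff_poly f -> cont2 f.
Proof.
  induction 1.
  - apply u_smooth.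
  - apply cont2_const.
  - apply cont2_plus; assumption.
  - apply cont2_mult; assumption.
Qed.

Lemma diff_poly_partials f : diff_poly f ->
  has_pd_t f /\ has_pd_th f /\ diff_poly (pd_t f) /\ diff_poly (pd_th f).
Proof.
  induction 1 as [ds|c|f g _ [Ft [Fth [Dft Dfth]]] _ [Gt [Gth [Dgt Dgth]]]
                 |f g Df [Ft [Fth [Dft Dfth]]] Dg [Gt [Gth [Dgt Dgth]]]].
  - destruct (u_smooth ds) as [_ [Ht Hth]].
    repeat split; [exact Ht|exact Hth|exact (diff_poly_deriv (true :: ds))
      |exact (diff_poly_deriv (false :: ds))].
  - assert (Et : pd_t (fun _ _ => c) = fun _ _ => 0).
    { extensionality a; extensionality b. apply pd_unique, derivable_pt_lim_const. }
    assert (Eth : pd_th (fun _ _ => c) = fun _ _ => 0).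
    { extensionality a; extensionality b. apply pd_unique, derivable_pt_lim_const. }
    unfold has_pd_t, has_pd_th. rewrite Et, Eth.
    repeat split; intros; (apply diff_poly_const || apply derivable_pt_lim_const).
  - assert (Et : pd_t (fun a b => f a b + g a b) = fun a b => pd_t f a b + pd_t g a b).
    { extensionality a; extensionality b. apply pd_unique, derivable_pt_lim_plus; auto. }
    assert (Eth : pd_th (fun a b => f a b + g a b) = fun a b => pd_th f a b + pd_th g a b).
    { extensionality a; extensionality b. apply pd_unique, derivable_pt_lim_plus; auto. }
    unfold has_pd_t, has_pd_th. rewrite Et, Eth.
    repeat split; intros; (apply diff_poly_plus || apply derivable_pt_lim_plus); auto.
  - assert (Et : pd_t (fun a b => f a b * g a b)
                 = fun a b => pd_t f a b * g a b + f a b * pd_t g a b).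
    { extensionality a; extensionality b. apply pd_unique.
      apply (derivable_pt_lim_mult (fun s => f s b) (fun s => g s b)); auto. }
    assert (Eth : pd_th (fun a b => f a b * g a b)
                  = fun a b => pd_th f a b * g a b + f a b * pd_th g a b).
    { extensionality a; extensionality b. apply pd_unique.
      apply (derivable_pt_lim_mult (fun s => f a s) (fun s => g a s)); auto. }
    unfold has_pd_t, has_pd_th. rewrite Et, Eth. repeat split.
    + intros a b. apply (derivable_pt_lim_mult (fun s => f s b) (fun s => g s b)); auto.
    + intros a b. apply (derivable_pt_lim_mult (fun s => f a s) (fun s => g a s)); auto.
    + apply diff_poly_plus; apply diff_poly_mult; assumption.
    + apply diff_poly_plus; apply diff_poly_mult; assumption.
Qed.

Lemma diff_poly_smooth2 f : diff_poly f -> smooth2 f.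
Proof.
  intros Hf ds. assert (Hds : diff_poly (iter_d2 ds f)).
  { induction ds as [|b ds IH]; simpl; [exact Hf|].
    destruct (diff_poly_partials _ IH) as [_ [_ [Ht Hth]]]. destruct b; assumption. }
  destruct (diff_poly_partials _ Hds) as [Ht [Hth _]].
  split; [apply diff_poly_cont2, Hds|split; assumption].
Qed.

End DifferentialPolynomials.

Lemma Derive_pd f x l : derivable_pt_lim f x l -> Derive f x = pd f x.
Proof.
  intro Hl. rewrite (pd_unique _ _ _ Hl). apply is_derive_unique, is_derive_Reals, Hl.
Qed.

Lemma cont2_continuity_2d_pt f a b : cont2 f -> continuity_2d_pt f a b.
Proof.
  intros Hf eps. destruct (Hf a b eps (cond_pos eps)) as [d [Hd Hfd]].
  exists (mkposreal d Hd). intros. apply Hfd; assumption.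
Qed.

Lemma pd_t_pd_th_comm u : smooth2 u -> pd_t (pd_th u) = pd_th (pd_t u).
Proof.
  intros Hu.
  destruct (Hu nil) as [_ [Ht Hth]].
  destruct (Hu (true :: nil)) as [_ [_ Hth_t]].
  destruct (Hu (false :: nil)) as [_ [Ht_th _]].
  destruct (Hu (true :: false :: nil)) as [C_th_t _].
  destruct (Hu (false :: true :: nil)) as [C_t_th _]. simpl in *.
  assert (Dth : forall b, (fun a => Derive (fun s => u a s) b) = (fun a => pd_th u a b)).
  { intro b. extensionality a. exact (Derive_pd _ _ _ (Hth a b)). }
  assert (Dt : forall a, (fun b => Derive (fun s => u s b) a) = (fun b => pd_t u a b)).
  { intro a. extensionality b. exact (Derive_pd _ _ _ (Ht a b)). }
  assert (E_th_t : (fun a b => Derive (fun z => Derive (fun s => u z s) b) a) = pd_t (pd_th u)).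
  { extensionality a; extensionality b. rewrite Dth. exact (Derive_pd _ _ _ (Ht_th a b)). }
  assert (E_t_th : (fun a b => Derive (fun z => Derive (fun s => u s z) a) b) = pd_th (pd_t u)).
  { extensionality a; extensionality b. rewrite Dt. exact (Derive_pd _ _ _ (Hth_t a b)). }
  extensionality a; extensionality b.
  rewrite <- (equal_f (equal_f E_th_t a) b), <- (equal_f (equal_f E_t_th a) b).
  apply Schwarz.
  - exists (mkposreal 1 Rlt_0_1). intros a' b' _ _. rewrite Dth, Dt. repeat split.
    + exists (pd_t u a' b'). apply is_derive_Reals, Ht.
    + exists (pd_th u a' b'). apply is_derive_Reals, Hth.
    + exists (pd_t (pd_th u) a' b'). apply is_derive_Reals, Ht_th.
    + exists (pd_th (pd_t u) a' b'). apply is_derive_Reals, Hth_t.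
  - rewrite E_th_t. apply cont2_continuity_2d_pt, C_th_t.
  - rewrite E_t_th. apply cont2_continuity_2d_pt, C_t_th.
Qed.

Definition near3 (t x y : R) (d : R) (z : R * R * R) : Prop :=
  punctured (fst (fst z)) (snd (fst z)) (snd z) /\ Rabs (fst (fst z) - t) < d /\
  Rabs (snd (fst z) - x) < d /\ Rabs (snd z - y) < d.

Definition uncurry3 (f : R -> R -> R -> R) (z : R * R * R) : R :=
  f (fst (fst z)) (snd (fst z)) (snd z).

Lemma near3_mono t x y d1 d2 z : 0 < d1 -> d1 <= d2 -> near3 t x y d1 z -> near3 t x y d2 z.
Proof. intros _ Hd [H0 [H1 [H2 H3]]]. repeat split; auto; lra. Qed.

Lemma tends_cont3_on f :
  (forall t x y, punctured t x y -> tends (near3 t x y) (uncurry3 f) (f t x y)) ->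
  cont3_on punctured f.
Proof.
  intros Hf t x y Hp eps Heps. destruct (Hf t x y Hp eps Heps) as [d [Hd Hfd]].
  exists d. split; [exact Hd|]. intros t' x' y' Hp' H1 H2 H3.
  apply (Hfd (t', x', y')). repeat split; assumption.
Qed.

Lemma tends_near3_t t x y : tends (near3 t x y) (fun z => fst (fst z)) t.
Proof. intros eps Heps. exists eps. split; [exact Heps|]. intros z [_ [H _]]. exact H. Qed.
Lemma tends_near3_x t x y : tends (near3 t x y) (fun z => snd (fst z)) x.
Proof. intros eps Heps. exists eps. split; [exact Heps|]. intros z [_ [_ [H _]]]. exact H. Qed.
Lemma tends_near3_y t x y : tends (near3 t x y) (fun z => snd z) y.
Proof. intros eps Heps. exists eps. split; [exact Heps|]. intros z [_ [_ [_ H]]]. exact H. Qed.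

Lemma continuity_pt_derivable g b l : derivable_pt_lim g b l -> continuity_pt g b.
Proof. intro Hl. apply derivable_continuous_pt. exists l. exact Hl. Qed.

Lemma continuity_pt_inv b : b <> 0 -> continuity_pt Rinv b.
Proof.
  intro Hb. eapply continuity_pt_derivable.
  apply (derivable_pt_lim_inv (fun s => s)); [apply derivable_pt_lim_id|exact Hb].
Qed.

Lemma tends_polar_lift h t x y : cont2 h -> (forall t, periodic (h t)) -> punctured t x y ->
  tends (near3 t x y) (uncurry3 (fun t x y => h t (polar_angle x y))) (h t (polar_angle x y)).
Proof.
  intros Hc Hh Hp. unfold punctured in Hp.
  destruct (Req_dec x 0) as [Hx|Hx].
  - subst x. assert (Hy : y <> 0) by (intro; subst; simpl in Hp; lra).
    rewrite (polar_angle_y_offset y) by nra.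
    apply tends_eventually_ext
      with (g := fun z => h (fst (fst z)) (angle_offset_y y - atan (snd (fst z) / snd z))).
    + apply near3_mono.
    + exists (Rabs y). split; [apply Rabs_pos_lt, Hy|]. intros z [_ [_ [_ Hz]]].
      unfold uncurry3. rewrite (polar_angle_y_offset y); [reflexivity|].
      apply same_sign_near, Hz.
    + apply (tends_comp2 _ _ (near3_mono t 0 y) h); [exact (Hc _ _)|apply tends_near3_t|].
      apply (tends_comp _ _ (fun q => angle_offset_y y - atan q)).
      * eapply continuity_pt_derivable.
        apply derivable_pt_lim_minus; [apply derivable_pt_lim_const|apply derivable_pt_lim_atan].
      * apply tends_mult; [apply near3_mono|apply tends_near3_x|].
        apply (tends_comp _ _ Rinv); [apply continuity_pt_inv, Hy|apply tends_near3_y].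
  - rewrite (periodic_polar_angle_x (h t) x) by (apply Hh || nra).
    apply tends_eventually_ext
      with (g := fun z => h (fst (fst z)) (angle_offset_x x + atan (snd z / snd (fst z)))).
    + apply near3_mono.
    + exists (Rabs x). split; [apply Rabs_pos_lt, Hx|]. intros z [_ [_ [Hz _]]].
      unfold uncurry3. apply periodic_polar_angle_x; [apply Hh|apply same_sign_near, Hz].
    + apply (tends_comp2 _ _ (near3_mono t x y) h); [exact (Hc _ _)|apply tends_near3_t|].
      apply (tends_comp _ _ (fun q => angle_offset_x x + atan q)).
      * eapply continuity_pt_derivable.
        apply derivable_pt_lim_plus; [apply derivable_pt_lim_const|apply derivable_pt_lim_atan].
      * apply tends_mult; [apply near3_mono|apply tends_near3_y|].
        apply (tends_comp _ _ Rinv); [apply continuity_pt_inv, Hx|apply tends_near3_x].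
Qed.

Inductive punct_smooth : (R -> R -> R -> R) -> Prop :=
| punct_smooth_const c : punct_smooth (fun _ _ _ => c)
| punct_smooth_x : punct_smooth (fun _ x _ => x)
| punct_smooth_y : punct_smooth (fun _ _ y => y)
| punct_smooth_inv_norm2 : punct_smooth (fun _ x y => / (x * x + y * y))
| punct_smooth_polar_lift h : smooth2 h -> (forall t, periodic (h t)) ->
    punct_smooth (fun t x y => h t (polar_angle x y))
| punct_smooth_plus f g : punct_smooth f -> punct_smooth g ->
    punct_smooth (fun t x y => f t x y + g t x y)
| punct_smooth_mult f g : punct_smooth f -> punct_smooth g ->
    punct_smooth (fun t x y => f t x y * g t x y)
| punct_smooth_ext f g : punct_smooth f ->
    (forall t x y, punctured t x y -> g t x y = f t x y) -> punct_smooth g.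

Lemma punct_smooth_tends f : punct_smooth f ->
  forall t x y, punctured t x y -> tends (near3 t x y) (uncurry3 f) (f t x y).
Proof.
  induction 1 as [c| | | |h Hh Hper|f g _ IHf _ IHg|f g _ IHf _ IHg|f g _ IHf Hfg];
    intros t x y Hp.
  - apply tends_const.
  - apply tends_near3_x.
  - apply tends_near3_y.
  - unfold punctured in Hp.
    apply (tends_comp _ _ Rinv); [apply continuity_pt_inv; nra|].
    apply tends_plus; [apply near3_mono| |];
      (apply tends_mult; [apply near3_mono|..]);
      (apply tends_near3_x || apply tends_near3_y).
  - apply tends_polar_lift; [exact (proj1 (Hh nil))|exact Hper|exact Hp].
  - apply tends_plus; [apply near3_mono|apply IHf|apply IHg]; exact Hp.
  - apply tends_mult; [apply near3_mono|apply IHf|apply IHg]; exact Hp.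
  - rewrite Hfg by exact Hp. apply tends_eventually_ext with (g := uncurry3 f).
    + apply near3_mono.
    + exists 1. split; [lra|]. intros z [Hz _]. apply Hfg, Hz.
    + apply IHf, Hp.
Qed.

Definition has_partials3 (f ft fx fy : R -> R -> R -> R) : Prop :=
  forall t x y, punctured t x y ->
    derivable_pt_lim (fun s => f s x y) t (ft t x y) /\
    derivable_pt_lim (fun s => f t s y) x (fx t x y) /\
    derivable_pt_lim (fun s => f t x s) y (fy t x y).

Lemma punctured_near_x t x y : punctured t x y ->
  exists d, 0 < d /\ forall s, Rabs (s - x) < d -> punctured t s y.
Proof.
  unfold punctured. intro Hp. destruct (Req_dec y 0) as [Hy|Hy].
  - subst y. assert (Hx : x <> 0) by (intro; subst; simpl in Hp; lra).
    exists (Rabs x). split; [apply Rabs_pos_lt, Hx|]. intros s Hs.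
    pose proof (same_sign_near s x Hs). nra.
  - exists 1. split; [lra|]. intros. nra.
Qed.

Lemma punctured_near_y t x y : punctured t x y ->
  exists d, 0 < d /\ forall s, Rabs (s - y) < d -> punctured t x s.
Proof.
  unfold punctured. intro Hp. destruct (Req_dec x 0) as [Hx|Hx].
  - subst x. assert (Hy : y <> 0) by (intro; subst; simpl in Hp; lra).
    exists (Rabs y). split; [apply Rabs_pos_lt, Hy|]. intros s Hs.
    pose proof (same_sign_near s y Hs). nra.
  - exists 1. split; [lra|]. intros. nra.
Qed.

Lemma has_partials3_inv_norm2 :
  has_partials3 (fun _ x y => / (x * x + y * y)) (fun _ _ _ => 0)
    (fun _ x y => -2 * x * (/ (x * x + y * y) * / (x * x + y * y)))
    (fun _ x y => -2 * y * (/ (x * x + y * y) * / (x * x + y * y))).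
Proof.
  intros t x y Hp. unfold punctured in Hp. assert (Hr : x * x + y * y <> 0) by nra.
  split; [apply derivable_pt_lim_const|split];
    (eapply derivable_pt_lim_value;
      [apply derivable_pt_lim_inv; [|exact Hr];
       repeat first [apply derivable_pt_lim_plus | apply derivable_pt_lim_mult
                    | apply derivable_pt_lim_id | apply derivable_pt_lim_const]
      |unfold fct_cte; field; exact Hr]).
Qed.

Lemma has_partials3_polar_lift h : smooth2 h -> (forall t, periodic (h t)) ->
  has_partials3 (fun t x y => h t (polar_angle x y))
    (fun t x y => pd_t h t (polar_angle x y))
    (fun t x y => pd_th h t (polar_angle x y) * (- y / (x ^ 2 + y ^ 2)))
    (fun t x y => pd_th h t (polar_angle x y) * (x / (x ^ 2 + y ^ 2))).
Proof.
  intros Hh Hper t x y Hp. destruct (Hh nil) as [_ [Ht Hth]].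
  split; [apply Ht|split].
  - apply derivable_pt_lim_polar_angle_x; [apply Hper|apply Hth|exact Hp].
  - apply derivable_pt_lim_polar_angle_y; [apply Hper|apply Hth|exact Hp].
Qed.

Lemma punct_smooth_polar_lift_partials h : smooth2 h -> (forall t, periodic (h t)) ->
  exists ft fx fy, punct_smooth ft /\ punct_smooth fx /\ punct_smooth fy /\
    has_partials3 (fun t x y => h t (polar_angle x y)) ft fx fy.
Proof.
  intros Hh Hper.
  do 3 eexists. split; [|split; [|split]]; [..|apply has_partials3_polar_lift; assumption].
  - apply punct_smooth_polar_lift; [apply smooth2_pd_t, Hh|apply periodic_pd_t, Hper].
  - eapply punct_smooth_ext.
    + apply punct_smooth_mult; [apply punct_smooth_polar_lift;
        [apply smooth2_pd_th, Hh|apply periodic_pd_th, Hper]|].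
      apply punct_smooth_mult;
        [apply punct_smooth_mult; [apply (punct_smooth_const (-1))|apply punct_smooth_y]
        |apply punct_smooth_inv_norm2].
    + intros t x y Hp. unfold punctured in Hp. simpl. f_equal. field. nra.
  - eapply punct_smooth_ext.
    + apply punct_smooth_mult; [apply punct_smooth_polar_lift;
        [apply smooth2_pd_th, Hh|apply periodic_pd_th, Hper]|].
      apply punct_smooth_mult; [apply punct_smooth_x|apply punct_smooth_inv_norm2].
    + intros t x y Hp. unfold punctured in Hp. simpl. f_equal. field. nra.
Qed.

Lemma has_partials3_ext f g ft fx fy : has_partials3 f ft fx fy ->
  (forall t x y, punctured t x y -> g t x y = f t x y) -> has_partials3 g ft fx fy.
Proof.
  intros Df Hfg t x y Hp. destruct (Df t x y Hp) as [Dt [Dx Dy]]. split; [|split].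
  - apply derivable_pt_lim_ext with (fun s => f s x y); [|exact Dt].
    intro s. symmetry. apply Hfg, Hp.
  - destruct (punctured_near_x t x y Hp) as [d [Hd Hnear]].
    apply derivable_pt_lim_near with (g := fun s => f t s y) (d := d); auto.
  - destruct (punctured_near_y t x y Hp) as [d [Hd Hnear]].
    apply derivable_pt_lim_near with (g := fun s => f t x s) (d := d); auto.
Qed.

Lemma punct_smooth_partials f : punct_smooth f ->
  exists ft fx fy, punct_smooth ft /\ punct_smooth fx /\ punct_smooth fy /\
    has_partials3 f ft fx fy.
Proof.
  induction 1 as [c| | | |h Hh Hper
    |f g _ [ft [fx [fy [Pft [Pfx [Pfy Df]]]]]] _ [gt [gx [gy [Pgt [Pgx [Pgy Dg]]]]]]
    |f g Pf [ft [fx [fy [Pft [Pfx [Pfy Df]]]]]] Pg [gt [gx [gy [Pgt [Pgx [Pgy Dg]]]]]]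
    |f g _ [ft [fx [fy [Pft [Pfx [Pfy Df]]]]]] Hfg].
  - exists (fun _ _ _ => 0), (fun _ _ _ => 0), (fun _ _ _ => 0).
    repeat split; apply punct_smooth_const || apply derivable_pt_lim_const.
  - exists (fun _ _ _ => 0), (fun _ _ _ => 1), (fun _ _ _ => 0).
    repeat split; apply punct_smooth_const || apply derivable_pt_lim_const
                  || apply derivable_pt_lim_id.
  - exists (fun _ _ _ => 0), (fun _ _ _ => 0), (fun _ _ _ => 1).
    repeat split; apply punct_smooth_const || apply derivable_pt_lim_const
                  || apply derivable_pt_lim_id.
  - do 3 eexists. split; [|split; [|split]]; [..|apply has_partials3_inv_norm2].
    + apply punct_smooth_const.
    + repeat constructor.
    + repeat constructor.
  - apply punct_smooth_polar_lift_partials; assumption.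
  - exists (fun t x y => ft t x y + gt t x y), (fun t x y => fx t x y + gx t x y),
      (fun t x y => fy t x y + gy t x y).
    repeat split; try (apply punct_smooth_plus; assumption);
      destruct (Df t x y H) as [? [? ?]], (Dg t x y H) as [? [? ?]];
      apply derivable_pt_lim_plus; assumption.
  - exists (fun t x y => ft t x y * g t x y + f t x y * gt t x y),
      (fun t x y => fx t x y * g t x y + f t x y * gx t x y),
      (fun t x y => fy t x y * g t x y + f t x y * gy t x y).
    repeat split; try (apply punct_smooth_plus; apply punct_smooth_mult; assumption);
      destruct (Df t x y H) as [? [? ?]], (Dg t x y H) as [? [? ?]].
    + apply (derivable_pt_lim_mult (fun s => f s x y) (fun s => g s x y)); assumption.
    + apply (derivable_pt_lim_mult (fun s => f t s y) (fun s => g t s y)); assumption.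
    + apply (derivable_pt_lim_mult (fun s => f t x s) (fun s => g t x s)); assumption.
  - exists ft, fx, fy. do 3 (split; [assumption|]).
    apply has_partials3_ext with f; assumption.
Qed.

Lemma punct_smooth_smooth3_on f : punct_smooth f -> smooth3_on punctured f.
Proof.
  intros Hf ds. assert (Hds : punct_smooth (iter_d3 ds f)).
  { induction ds as [|n ds IH]; simpl; [exact Hf|].
    destruct (punct_smooth_partials _ IH) as [ft [fx [fy [Pt [Px [Py D]]]]]].
    destruct n as [|[|n]]; simpl; [apply punct_smooth_ext with ft
      |apply punct_smooth_ext with fx|apply punct_smooth_ext with fy]; auto;
      intros t x y Hp; apply pd_unique, (D t x y Hp). }
  destruct (punct_smooth_partials _ Hds) as [ft [fx [fy [_ [_ [_ D]]]]]].
  split; [apply tends_cont3_on, punct_smooth_tends, Hds|].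
  intros t x y Hp. destruct (D t x y Hp) as [Dt [Dx Dy]].
  unfold pdT, pdX, pdY.
  rewrite (pd_unique _ _ _ Dt), (pd_unique _ _ _ Dx), (pd_unique _ _ _ Dy).
  auto.
Qed.

Lemma pdT_on_punctured f g t x y l :
  (forall t x y, punctured t x y -> f t x y = g t x y) -> punctured t x y ->
  derivable_pt_lim (fun s => g s x y) t l -> pdT f t x y = l.
Proof.
  intros Hfg Hp Hg. apply pd_unique.
  apply derivable_pt_lim_ext with (fun s => g s x y); [|exact Hg].
  intro s. symmetry. apply Hfg, Hp.
Qed.

Lemma pdX_on_punctured f g t x y l :
  (forall t x y, punctured t x y -> f t x y = g t x y) -> punctured t x y ->
  derivable_pt_lim (fun s => g t s y) x l -> pdX f t x y = l.
Proof.
  intros Hfg Hp Hg. apply pd_unique.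
  destruct (punctured_near_x t x y Hp) as [d [Hd Hnear]].
  apply derivable_pt_lim_near with (g := fun s => g t s y) (d := d); auto.
Qed.

Lemma pdY_on_punctured f g t x y l :
  (forall t x y, punctured t x y -> f t x y = g t x y) -> punctured t x y ->
  derivable_pt_lim (fun s => g t x s) y l -> pdY f t x y = l.
Proof.
  intros Hfg Hp Hg. apply pd_unique.
  destruct (punctured_near_y t x y Hp) as [d [Hd Hnear]].
  apply derivable_pt_lim_near with (g := fun s => g t x s) (d := d); auto.
Qed.

Definition pressure_coef (u : R -> R -> R) (t th : R) : R :=
  u t th * u t th - / 4 * (pd_th u t th * pd_th u t th)
  - / 2 * (u t th * pd_th (pd_th u) t th) - / 2 * pd_t (pd_th u) t th.

Definition pressure (u : R -> R -> R) (t x y : R) : R :=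
  / 2 * (x * x + y * y) * pressure_coef u t (polar_angle x y).

Definition velocity1 (u : R -> R -> R) (t x y : R) : R :=
  - y * u t (polar_angle x y) + / 2 * x * pd_th u t (polar_angle x y).

Definition velocity2 (u : R -> R -> R) (t x y : R) : R :=
  x * u t (polar_angle x y) + / 2 * y * pd_th u t (polar_angle x y).

Lemma diff_poly_pressure_coef u : diff_poly u (pressure_coef u).
Proof.
  replace (pressure_coef u) with (fun a b =>
      (iter_d2 nil u a b * iter_d2 nil u a b
       + - / 4 * (iter_d2 (false :: nil) u a b * iter_d2 (false :: nil) u a b))
    + (- / 2 * (iter_d2 nil u a b * iter_d2 (false :: false :: nil) u a b)
       + - / 2 * iter_d2 (true :: false :: nil) u a b)).
  - repeat first [apply diff_poly_plus | apply diff_poly_mult | apply diff_poly_const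
                 | apply diff_poly_deriv].
  - extensionality a; extensionality b. unfold pressure_coef. simpl. ring.
Qed.

Lemma periodic_pressure_coef u : (forall t, periodic (u t)) ->
  forall t, periodic (pressure_coef u t).
Proof.
  intros Hu t th. unfold pressure_coef.
  rewrite (periodic_pd_t _ (periodic_pd_th _ Hu)), (periodic_pd_th _ Hu),
    (periodic_pd_th _ (periodic_pd_th _ Hu)), Hu.
  reflexivity.
Qed.

Lemma punct_smooth_pressure u : smooth2 u -> (forall t, periodic (u t)) ->
  punct_smooth (pressure u).
Proof.
  intros Hu Hper. unfold pressure.
  repeat apply punct_smooth_mult; try apply punct_smooth_const.
  - apply punct_smooth_plus; apply punct_smooth_mult;
      (apply punct_smooth_x || apply punct_smooth_y).
  - apply punct_smooth_polar_lift.
    + apply (diff_poly_smooth2 u Hu), diff_poly_pressure_coef.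
    + apply periodic_pressure_coef, Hper.
Qed.

Lemma pressure_polar u t th r : (forall t, periodic (u t)) -> 0 < r ->
  pressure u t (r * cos th) (r * sin th) = / 2 * r ^ 2 * pressure_coef u t th.
Proof.
  intros Hper Hr. destruct (polar_angle_cos_sin r th Hr) as [m Hm].
  unfold pressure. rewrite <- (periodic_IZR _ (periodic_pressure_coef u Hper t) _ m), <- Hm.
  replace (r * cos th * (r * cos th) + r * sin th * (r * sin th))
    with ((r * cos th) ^ 2 + (r * sin th) ^ 2) by ring.
  rewrite sum_sq_cos_sin. ring.
Qed.

Lemma velocity_cartesian u V1 V2 :
  (forall t th r, 0 < r ->
     V1 t (r * cos th) (r * sin th)
       = u t th * (- (r * sin th)) + r / 2 * pd_th u t th * cos th /\
     V2 t (r * cos th) (r * sin th)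
       = u t th * (r * cos th) + r / 2 * pd_th u t th * sin th) ->
  forall t x y, punctured t x y ->
    V1 t x y = velocity1 u t x y /\ V2 t x y = velocity2 u t x y.
Proof.
  intros HV t x y Hp. destruct (polar_coordinates x y Hp) as [Hx Hy].
  unfold velocity1, velocity2.
  set (th := polar_angle x y) in *. set (r := sqrt (x ^ 2 + y ^ 2)) in *.
  assert (Hr : 0 < r) by (apply sqrt_lt_R0, Hp).
  destruct (HV t th r Hr) as [E1 E2]. rewrite <- Hx, <- Hy in E1, E2.
  rewrite E1, E2. split.
  - rewrite Hx. field.
  - rewrite Hy. field.
Qed.

Section EulerAtPoint.
(* Otherwise [apply] unfolds the epsilon-defined derivatives while unifying, which is
   very slow. *)
Local Opaque pd pd_t pd_th.
Variables (u : R -> R -> R) (V1 V2 : R -> R -> R -> R) (t x y : R).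
Hypothesis u_smooth : smooth2 u.
Hypothesis u_periodic : forall t, periodic (u t).
Hypothesis V_cartesian : forall t x y, punctured t x y ->
  V1 t x y = velocity1 u t x y /\ V2 t x y = velocity2 u t x y.
Hypothesis xy_punctured : punctured t x y.

Let th := polar_angle x y.
Let r2 := x ^ 2 + y ^ 2.
Let u0 := u t th.
Let u1 := pd_th u t th.
Let u2 := pd_th (pd_th u) t th.
Let ut := pd_t u t th.
Let u1t := pd_t (pd_th u) t th.

Lemma u_has_pd_t : forall a b, derivable_pt_lim (fun s => u s b) a (pd_t u a b).
Proof. exact (proj1 (proj2 (u_smooth nil))). Qed.
Lemma u_has_pd_th : forall a b, derivable_pt_lim (fun s => u a s) b (pd_th u a b).
Proof. exact (proj2 (proj2 (u_smooth nil))). Qed.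
Lemma u1_has_pd_t : forall a b, derivable_pt_lim (fun s => pd_th u s b) a (pd_t (pd_th u) a b).
Proof. exact (proj1 (proj2 (u_smooth (false :: nil)))). Qed.
Lemma u1_has_pd_th : forall a b, derivable_pt_lim (fun s => pd_th u a s) b (pd_th (pd_th u) a b).
Proof. exact (proj2 (proj2 (u_smooth (false :: nil)))). Qed.
Lemma u1_periodic : forall t, periodic (pd_th u t).
Proof. exact (periodic_pd_th u u_periodic). Qed.

Lemma pressure_coef_has_pd_th :
  forall a b, derivable_pt_lim (fun s => pressure_coef u a s) b (pd_th (pressure_coef u) a b).
Proof.
  exact (proj2 (proj2 (diff_poly_smooth2 u u_smooth _ (diff_poly_pressure_coef u) nil))).
Qed.

Lemma pressure_coef_periodic : forall t, periodic (pressure_coef u t).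
Proof. exact (periodic_pressure_coef u u_periodic). Qed.

Ltac derive :=
  repeat first
    [ apply derivable_pt_lim_const | apply derivable_pt_lim_id
    | apply derivable_pt_lim_plus | apply derivable_pt_lim_minus
    | apply derivable_pt_lim_mult | apply derivable_pt_lim_opp
    | apply derivable_pt_lim_polar_angle_x | apply derivable_pt_lim_polar_angle_y
    | apply u_has_pd_t | apply u_has_pd_th | apply u1_has_pd_t | apply u1_has_pd_th
    | apply derivable_pt_lim_inv
    | apply u_periodic | apply u1_periodic | exact xy_punctured ].

Lemma pdT_V1 : pdT V1 t x y = - y * ut + / 2 * x * u1t.
Proof.
  apply pdT_on_punctured with (velocity1 u); [apply V_cartesian|exact xy_punctured|].
  unfold velocity1. eapply derivable_pt_lim_value; [derive|]. unfold ut, u1t, th. ring.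
Qed.

Lemma pdT_V2 : pdT V2 t x y = x * ut + / 2 * y * u1t.
Proof.
  apply pdT_on_punctured with (velocity2 u); [apply V_cartesian|exact xy_punctured|].
  unfold velocity2. eapply derivable_pt_lim_value; [derive|]. unfold ut, u1t, th. ring.
Qed.

Lemma pdX_V1 : pdX V1 t x y = y * y / r2 * u1 + / 2 * u1 - x * y / (2 * r2) * u2.
Proof.
  apply pdX_on_punctured with (velocity1 u); [apply V_cartesian|exact xy_punctured|].
  unfold velocity1. eapply derivable_pt_lim_value; [derive|].
  unfold u1, u2, th, r2. unfold punctured in xy_punctured. field. lra.
Qed.

Lemma pdY_V1 : pdY V1 t x y = - u0 - x * y / r2 * u1 + x * x / (2 * r2) * u2.
Proof.
  apply pdY_on_punctured with (velocity1 u); [apply V_cartesian|exact xy_punctured|].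
  unfold velocity1. eapply derivable_pt_lim_value; [derive|].
  unfold u0, u1, u2, th, r2. unfold punctured in xy_punctured. field. lra.
Qed.

Lemma pdX_V2 : pdX V2 t x y = u0 - x * y / r2 * u1 - y * y / (2 * r2) * u2.
Proof.
  apply pdX_on_punctured with (velocity2 u); [apply V_cartesian|exact xy_punctured|].
  unfold velocity2. eapply derivable_pt_lim_value; [derive|].
  unfold u0, u1, u2, th, r2. unfold punctured in xy_punctured. field. lra.
Qed.

Lemma pdY_V2 : pdY V2 t x y = x * x / r2 * u1 + / 2 * u1 + x * y / (2 * r2) * u2.
Proof.
  apply pdY_on_punctured with (velocity2 u); [apply V_cartesian|exact xy_punctured|].
  unfold velocity2. eapply derivable_pt_lim_value; [derive|].
  unfold u1, u2, th, r2. unfold punctured in xy_punctured. field. lra.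
Qed.

Let p := pressure_coef u t th.
Let p1 := pd_th (pressure_coef u) t th.

Lemma pd_th_pressure_coef : p1 = 2 * u0 * u1 - u1 * u2
  - / 2 * (u0 * pd_th (pd_th (pd_th u)) t th) - / 2 * pd_th (pd_t (pd_th u)) t th.
Proof.
  unfold p1. unfold pd_th at 1. apply pd_unique. unfold pressure_coef.
  destruct (u_smooth (false :: false :: nil)) as [_ [_ u2_has_pd_th]].
  destruct (u_smooth (true :: false :: nil)) as [_ [_ u1t_has_pd_th]].
  simpl in u2_has_pd_th, u1t_has_pd_th.
  eapply derivable_pt_lim_value.
  - repeat first [ apply derivable_pt_lim_const | apply derivable_pt_lim_minus
      | apply derivable_pt_lim_mult | apply u_has_pd_th | apply u1_has_pd_th
      | apply u2_has_pd_th | apply u1t_has_pd_th ].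
  - cbv beta. unfold u0, u1, u2. field.
Qed.

Lemma pdX_pressure : pdX (pressure u) t x y = x * p - / 2 * y * p1.
Proof.
  unfold pdX, pressure. apply pd_unique.
  eapply derivable_pt_lim_value.
  - apply derivable_pt_lim_mult; [derive|].
    apply derivable_pt_lim_polar_angle_x;
      [apply pressure_coef_periodic|apply pressure_coef_has_pd_th|exact xy_punctured].
  - unfold p, p1, th. unfold punctured in xy_punctured. field. lra.
Qed.

Lemma pdY_pressure : pdY (pressure u) t x y = y * p + / 2 * x * p1.
Proof.
  unfold pdY, pressure. apply pd_unique.
  eapply derivable_pt_lim_value.
  - apply derivable_pt_lim_mult; [derive|].
    apply derivable_pt_lim_polar_angle_y;
      [apply pressure_coef_periodic|apply pressure_coef_has_pd_th|exact xy_punctured].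
  - unfold p, p1, th. unfold punctured in xy_punctured. field. lra.
Qed.

Lemma div_rho_velocity :
  pdX (fun t' x' y' => rho x' y' * V1 t' x' y') t x y
  + pdY (fun t' x' y' => rho x' y' * V2 t' x' y') t x y = 0.
Proof.
  unfold punctured in xy_punctured.
  assert (Hr : x * x + y * y <> 0) by nra.
  eassert (Ex : pdX (fun t' x' y' => rho x' y' * V1 t' x' y') t x y = _).
  { apply pdX_on_punctured
      with (fun t x y => / ((x * x + y * y) * (x * x + y * y)) * velocity1 u t x y).
    - intros t' x' y' Hp. rewrite (proj1 (V_cartesian t' x' y' Hp)).
      unfold rho. f_equal. f_equal. ring.
    - exact xy_punctured.
    - unfold velocity1. derive. cbv beta. nra. }
  eassert (Ey : pdY (fun t' x' y' => rho x' y' * V2 t' x' y') t x y = _).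
  { apply pdY_on_punctured
      with (fun t x y => / ((x * x + y * y) * (x * x + y * y)) * velocity2 u t x y).
    - intros t' x' y' Hp. rewrite (proj2 (V_cartesian t' x' y' Hp)).
      unfold rho. f_equal. f_equal. ring.
    - exact xy_punctured.
    - unfold velocity2. derive. cbv beta. nra. }
  rewrite Ex, Ey. field. nra.
Qed.

Lemma euler_momentum : CH_eq u t th ->
  pdT V1 t x y + V1 t x y * pdX V1 t x y + V2 t x y * pdY V1 t x y = - pdX (pressure u) t x y /\
  pdT V2 t x y + V1 t x y * pdX V2 t x y + V2 t x y * pdY V2 t x y = - pdY (pressure u) t x y.
Proof.
  intro CH.
  rewrite pdT_V1, pdT_V2, pdX_V1, pdY_V1, pdX_V2, pdY_V2, pdX_pressure, pdY_pressure,
    pd_th_pressure_coef.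
  destruct (V_cartesian t x y xy_punctured) as [-> ->].
  unfold velocity1, velocity2, p, r2, u0, u1, u2, ut, u1t, CH_eq in *. fold th in CH |- *.
  unfold pressure_coef.
  rewrite (pd_t_pd_th_comm u u_smooth) in *.
  assert (Hut : pd_t u t th = / 4 * pd_th (pd_th (pd_t u)) t th - 3 * pd_th u t th * u t th
    + / 2 * pd_th (pd_th u) t th * pd_th u t th + / 4 * pd_th (pd_th (pd_th u)) t th * u t th)
    by lra.
  rewrite Hut. unfold punctured in xy_punctured.
  split; field; lra.
Qed.
End EulerAtPoint.

Theorem mainTheorem1 :
  forall (T : R) (u : R -> R -> R),
    0 < T ->
    smooth2 u ->
    (forall t th, u t (th + 2 * PI) = u t th) ->
    (forall t th, 0 <= t <= T -> CH_eq u t th) ->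
    forall V1 V2 : R -> R -> R -> R,
    (forall t th r, 0 < r ->
       V1 t (r * cos th) (r * sin th)
         = u t th * (- (r * sin th)) + r / 2 * pd_th u t th * cos th /\
       V2 t (r * cos th) (r * sin th)
         = u t th * (r * cos th) + r / 2 * pd_th u t th * sin th) ->
    exists (P : R -> R -> R -> R) (p : R -> R -> R),
      smooth3_on punctured P /\
      smooth2 p /\
      (forall t th, p t (th + 2 * PI) = p t th) /\
      (forall t th r, 0 < r ->
         P t (r * cos th) (r * sin th) = / 2 * r ^ 2 * p t th) /\
      (forall t x y, 0 <= t <= T -> 0 < x ^ 2 + y ^ 2 ->
         pdT V1 t x y + V1 t x y * pdX V1 t x y + V2 t x y * pdY V1 t x y
           = - pdX P t x y /\
         pdT V2 t x y + V1 t x y * pdX V2 t x y + V2 t x y * pdY V2 t x y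
           = - pdY P t x y /\
         pdX (fun t' x' y' => rho x' y' * V1 t' x' y') t x y
           + pdY (fun t' x' y' => rho x' y' * V2 t' x' y') t x y = 0).
Proof.
  intros T u _ Hu Hper HCH V1 V2 HV.
  exists (pressure u), (pressure_coef u).
  split; [apply punct_smooth_smooth3_on, punct_smooth_pressure; assumption|].
  split; [apply (diff_poly_smooth2 u Hu), diff_poly_pressure_coef|].
  split; [exact (periodic_pressure_coef u Hper)|].
  split; [intros t th r Hr; apply pressure_polar; assumption|].
  intros t x y Ht Hxy.
  assert (HVc := velocity_cartesian u V1 V2 HV).
  destruct (euler_momentum u V1 V2 t x y Hu Hper HVc Hxy (HCH _ _ Ht)) as [Hmx Hmy].
  split; [exact Hmx|split; [exact Hmy|]].
  exact (div_rho_velocity u V1 V2 t x y Hu Hper HVc Hxy).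
Qed.
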